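(* Let $\tau_1>0$ and let $\pi^u_{ij}$ be the marginal density of $\sigma_{ij}$ when $\sigma_{ij}\mid\rho_{ij}\sim N\big(0,\frac{\rho_{ij}}{1-\rho_{ij}}\tau_1^2\big)$ and $\rho_{ij}\sim\mathrm{Beta}(a,b)$, i.e. $\pi^u_{ij}(x)=\int_0^1 N\big(x\mid0,\frac{\rho}{1-\rho}\tau_1^2\big)\,\mathrm{Beta}(\rho\mid a,b)\,d\rho$. If $a=b=1/2$ and $\tau_1^2\asymp1/(np^4\tau^2)$, then for all sufficiently large $n$, $$\pi^u_{ij}(x)\ge\sqrt{\frac{1}{2\pi^3}}\,\frac{\tau_1}{x^2}\qquad\text{for all }x>1.$$
   Context: Here $n$ is the sample size, $p=p_n\to\infty$, $\tau\ge 1$, and $\tau_1=\tau_{1,n}$ depends on $n$; $a_n\asymp b_n$ means $a_n/b_n$ is bounded above and away from zero. *)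

From HB Require Import structures.
From mathcomp Require Import all_boot all_order all_algebra.
From mathcomp Require Import all_classical all_reals all_analysis.
From mathcomp Require Import normal_distribution.
Import Order.TTheory GRing.Theory Num.Theory.
Import numFieldNormedType.Exports.
Local Open Scope classical_set_scope.
Local Open Scope ring_scope.

Definition Beta_fn {R : realType} (a b : R) : R :=
  fine (\int[@lebesgue_measure R]_(t in `]0%R, 1%R[) (t `^ (a - 1) * (1 - t) `^ (b - 1))%:E)%E.

Definition beta_density {R : realType} (a b rho : R) : R :=
  rho `^ (a - 1) * (1 - rho) `^ (b - 1) / Beta_fn a b.

Definition normal_density_var {R : realType} (x v : R) : R :=
  normal_pdf 0 (Num.sqrt v) x.

Definition pi_u {R : realType} (a b tau1 x : R) : \bar R :=
  (\int[@lebesgue_measure R]_(rho in `]0%R, 1%R[)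
     (normal_density_var x (rho / (1 - rho) * tau1 ^+ 2) * beta_density a b rho)%:E)%E.

From HB Require Import structures.
From mathcomp Require Import all_boot all_order all_algebra.
From mathcomp Require Import all_classical all_reals all_analysis.
From mathcomp Require Import normal_distribution.
From mathcomp Require Import measurable_realfun ring lra.
Import Order.TTheory GRing.Theory Num.Theory.
Import numFieldNormedType.Exports.
Local Open Scope classical_set_scope.
Local Open Scope ring_scope.

(** With [a = b = 1/2] the Beta density is [(t (1 - t))^(-1/2) / B], and the
   integrand of [pi_u] simplifies to [K * r^-1 * exp (c - c / r)] with
   [K = (tau1 sqrt(2 pi) B)^-1] and [c = x^2 / (2 tau1^2)].  On [[3/4, 1[] we
   have [r^-1 >= (3/4) r^-2], and [r^-2 exp (c - c / r)] has the primitive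
   [exp (c - c / r) / c], so [pi_u >= (3/4) K (1 - exp (- c / 3)) / c].
   Since [B(1/2, 1/2) <= pi] (the integrand has primitive [asin (2 t - 1)]) and
   [tau1^2 <= 1/12] for large [n] forces [c >= 6], this is at least
   [tau1 / (pi sqrt(2 pi) x^2)]. *)

Section arcsine_kernel.
Context {R : realType}.
Local Notation mu := (@lebesgue_measure R).

Lemma oo01_continuous_measurable_fun (f : R -> R) :
  (forall t, 0 < t < 1 -> {for t, continuous f}) ->
  measurable_fun (`]0%R, 1%R[ : set R) (EFin \o f).
Proof.
move=> fc; apply/measurable_EFinP; apply: open_continuous_measurable_fun.
  exact: interval_open.
by move=> t /set_mem; rewrite /= in_itv; exact: fc.
Qed.

Definition arcsine_kernel (t : R) : R := (Num.sqrt (t * (1 - t)))^-1.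

Lemma powR_beta_half_kernelE (t : R) : 0 < t < 1 ->
  t `^ (1/2 - 1) * (1 - t) `^ (1/2 - 1) = arcsine_kernel t.
Proof.
case/andP=> t0 t1; have -> : 1/2 - 1 = - 2^-1 :> R by field.
rewrite !powRN !powR12_sqrt ?subr_ge0 ?ltW //.
by rewrite /arcsine_kernel sqrtrM ?ltW // invfM.
Qed.

Lemma arcsine_kernel_ge1 (t : R) : 0 < t < 1 -> 1 <= arcsine_kernel t.
Proof.
case/andP=> t0 t1; have tt0 : 0 < t * (1 - t) by rewrite mulr_gt0 ?subr_gt0.
rewrite /arcsine_kernel invr_ge1 ?unitfE ?gt_eqF ?sqrtr_gt0 //.
by rewrite -[leRHS]sqrtr1 ler_sqrt //; nra.
Qed.

Lemma continuous_arcsine_kernel (t : R) : 0 < t < 1 ->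
  {for t, continuous arcsine_kernel}.
Proof.
case/andP=> t0 t1; apply: continuousV.
  by rewrite sqrtr_eq0 -ltNge mulr_gt0 ?subr_gt0.
apply: continuous_comp; last exact: sqrt_continuous.
apply: continuousM; first exact: cvg_id.
by apply: continuousB; [exact: cvg_cst | exact: cvg_id].
Qed.

Lemma is_derive_asin_affine (t : R) : 0 < t < 1 ->
  is_derive t 1 (fun u => asin (2 * u - 1)) (arcsine_kernel t).
Proof.
case/andP=> t0 t1.
have affine_t : -1 < 2 * t - 1 < 1 by apply/andP; split; lra.
have affine_deriv : is_derive t (1 : R) (fun u => 2 * u - 1) 2.
  by apply: is_derive_eq; rewrite subr0 /GRing.scale /= mulr1.
have := @is_derive1_comp _ asin (fun u => 2 * u - 1) _ _ _
  (is_derive1_asin affine_t) affine_deriv.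
congr is_derive.
have -> : 1 - (2 * t - 1) ^+ 2 = 2 ^+ 2 * (t * (1 - t)) by ring.
rewrite /arcsine_kernel sqrtrM ?sqrtr_sqr ?exprn_ge0 // invfM ger0_norm //.
by rewrite mulrAC mulVf // mul1r.
Qed.

Lemma integral_arcsine_kernel (e : R) : 0 < e < 1/2 ->
  (\int[mu]_(t in `[e, (1 - e)%R]) (arcsine_kernel t)%:E =
   (asin (2 * (1 - e) - 1) - asin (2 * e - 1))%:E)%E.
Proof.
case/andP=> e0 e1; have e_lt : e < 1 - e by lra.
have deriv t : e <= t -> t <= 1 - e ->
    is_derive t 1 (fun u => asin (2 * u - 1)) (arcsine_kernel t).
  by move=> ? ?; apply: is_derive_asin_affine; apply/andP; split; lra.
apply: (@continuous_FTC2 _ _ (fun u => asin (2 * u - 1))) => //.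
- apply: continuous_in_subspaceT => t /set_mem /=; rewrite in_itv /= => /andP[? ?].
  by apply: continuous_arcsine_kernel; apply/andP; split; lra.
- split.
  + move=> t; rewrite in_itv /= => /andP[? ?].
    by case: (deriv t (ltW _) (ltW _)).
  + apply/cvg_at_right_filter/differentiable_continuous/derivable1_diffP.
    by case: (deriv e (lexx e) (ltW e_lt)).
  + apply/cvg_at_left_filter/differentiable_continuous/derivable1_diffP.
    by case: (deriv (1 - e) (ltW e_lt) (lexx _)).
- move=> t; rewrite in_itv /= => /andP[? ?]; rewrite derive1E.
  by case: (deriv t (ltW _) (ltW _)).
Qed.

Definition itv_exhaust01 (n : nat) : set R :=
  [set` `[n.+3%:R^-1, (1 - n.+3%:R^-1)%R]].

Lemma inv_natSSS_lt_half (n : nat) : 0 < (n.+3%:R^-1 : R) < 1/2.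
Proof.
by rewrite invr_gt0 ltr0n /= mul1r ltf_pV2 ?posrE ?ltr0n // ltr_nat.
Qed.

Lemma nondecreasing_itv_exhaust01 : nondecreasing_seq itv_exhaust01.
Proof.
move=> m n mn; apply/subsetPset => t; rewrite /itv_exhaust01 /= !in_itv /=.
have : n.+3%:R^-1 <= m.+3%:R^-1 :> R.
  by rewrite lef_pV2 ?posrE ?ltr0n // ler_nat !ltnS.
move: (n.+3%:R^-1) (m.+3%:R^-1) => en em ? /andP[? ?].
by apply/andP; split; lra.
Qed.

Lemma bigcup_itv_exhaust01 : \bigcup_n itv_exhaust01 n = `]0%R, 1%R[%classic.
Proof.
apply/seteqP; split=> t /=.
  case=> n _; rewrite /itv_exhaust01 /= !in_itv /=.
  have /andP[] := inv_natSSS_lt_half n; move: (n.+3%:R^-1) => e ? ? /andP[? ?].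
  by apply/andP; split; lra.
rewrite in_itv /= => /andP[t0 t1].
have m0 : 0 < Num.min t (1 - t) by rewrite lt_min t0 subr_gt0.
have [N _ HN] := near_infty_natSinv_lt (PosNum m0).
exists N => //; have := HN N (leqnn N); rewrite /= lt_min => /andP[tN tN'].
have eN : N.+3%:R^-1 <= N.+1%:R^-1 :> R.
  by rewrite lef_pV2 ?posrE ?ltr0n // ler_nat; exact/leqW/leqW.
move: tN tN' eN; rewrite /itv_exhaust01 /= in_itv /=.
move: (N.+3%:R^-1) (N.+1%:R^-1) => a b ? ? ?.
by apply/andP; split; lra.
Qed.

Lemma integral_arcsine_kernel_le_pi :
  (\int[mu]_(t in `]0%R, 1%R[) (arcsine_kernel t)%:E <= pi%:E)%E.
Proof.
have sub n : itv_exhaust01 n `<=` `]0%R, 1%R[%classic.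
  by rewrite -bigcup_itv_exhaust01; exact: bigcup_sup.
have mf n : measurable_fun (itv_exhaust01 n) (EFin \o arcsine_kernel).
  exact: measurable_funS (measurable_itv _) (sub n)
    (oo01_continuous_measurable_fun _ continuous_arcsine_kernel).
have f0 n t : itv_exhaust01 n t -> (0 <= (arcsine_kernel t)%:E)%E.
  by rewrite lee_fin invr_ge0 sqrtr_ge0.
have cvg_int := ge0_nondecreasing_set_cvg_integral (mu := mu)
  nondecreasing_itv_exhaust01 (fun n => measurable_itv _) mf f0.
rewrite -bigcup_itv_exhaust01 -(cvg_lim _ cvg_int) //.
apply: lime_le; first exact: cvgP cvg_int.
apply: nearW => n; rewrite integral_arcsine_kernel ?inv_natSSS_lt_half // lee_fin.
have /andP[e0 e1] := inv_natSSS_lt_half n; move: (n.+3%:R^-1) e0 e1 => e e0 e1.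
have lb : - (pi / 2) <= asin (2 * e - 1 : R).
  by apply: asin_geNpi2; apply/andP; split; lra.
have ub : asin (2 * (1 - e) - 1 : R) <= pi / 2.
  by apply: asin_lepi2; apply/andP; split; lra.
lra.
Qed.

Lemma integral_arcsine_kernel_ge1 :
  (1%:E <= \int[mu]_(t in `]0%R, 1%R[) (arcsine_kernel t)%:E)%E.
Proof.
have <- : (\int[mu]_(t in `]0%R, 1%R[) (cst 1%:E t) = 1%:E :> \bar R)%E.
  rewrite integral_cst // mul1e.
  by have := @lebesgue_measure_itv R `]0, 1[; rewrite /= lte_fin ltr01 sube0.
apply: ge0_le_integral => //.
  exact: oo01_continuous_measurable_fun _ continuous_arcsine_kernel.
by move=> t /=; rewrite in_itv /= => t01; rewrite lee_fin arcsine_kernel_ge1.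
Qed.

(* In fact [Beta_fn (1/2) (1/2) = pi]; these bounds suffice, the lower one
   ensuring that [beta_density] does not divide by [0]. *)
Lemma Beta_fn_half_bounds : 1 <= Beta_fn (1/2 : R) (1/2) <= pi.
Proof.
rewrite /Beta_fn.
have -> : (\int[mu]_(t in `]0%R, 1%R[) (t `^ (1/2 - 1) * (1 - t) `^ (1/2 - 1))%:E
    = \int[mu]_(t in `]0%R, 1%R[) (arcsine_kernel t)%:E)%E.
  apply: eq_integral => t; rewrite inE /= in_itv /= => t01.
  by rewrite powR_beta_half_kernelE.
move: integral_arcsine_kernel_ge1 integral_arcsine_kernel_le_pi.
by case: (\int[mu]_(t in _) _)%E => [r| |] //=; rewrite !lee_fin => -> ->.
Qed.

End arcsine_kernel.

Section scale_mixture.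
Context {R : realType}.
Local Notation mu := (@lebesgue_measure R).

Lemma normal_density_varE (x v : R) : 0 < v ->
  normal_density_var x v = (Num.sqrt (2 * pi * v))^-1 * expR (- x ^+ 2 / (2 * v)).
Proof.
move=> v0; have sv0 : Num.sqrt v != 0 by rewrite sqrtr_eq0 -ltNge.
rewrite /normal_density_var (normal_pdfE _ sv0) /normal_peak /normal_fun.
rewrite sqr_sqrtr ?ltW // subr0 !mulr2n.
by congr (_^-1 * expR (- _ / _)); [congr (Num.sqrt _) | ]; ring.
Qed.

Definition mix_kernel (c r : R) : R := r^-1 * expR (c - c / r).

Lemma normal_beta_half_productE (t x r : R) : 0 < t -> 0 < r < 1 ->
  normal_density_var x (r / (1 - r) * t ^+ 2) * beta_density (1/2) (1/2) r =
  (t * Num.sqrt (2 * pi) * Beta_fn (1/2 : R) (1/2))^-1 *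
    mix_kernel (x ^+ 2 / (2 * t ^+ 2)) r.
Proof.
move=> t0 r01; have /andP[r0 r1] := r01.
have r1' : 1 - r != 0 by rewrite subr_eq0 gt_eqF.
have pi0 : 0 < pi :> R := pi_gt0 R.
have v0 : 0 < r / (1 - r) * t ^+ 2 by rewrite mulr_gt0 ?divr_gt0 ?subr_gt0 ?exprn_gt0.
rewrite normal_density_varE // /beta_density powR_beta_half_kernelE //.
rewrite /arcsine_kernel /mix_kernel.
have -> : - x ^+ 2 / (2 * (r / (1 - r) * t ^+ 2)) =
    x ^+ 2 / (2 * t ^+ 2) - x ^+ 2 / (2 * t ^+ 2) / r.
  by field; rewrite r1' !gt_eqF.
have sqrt01 : 0 < Num.sqrt (r * (1 - r)) by rewrite sqrtr_gt0 mulr_gt0 ?subr_gt0.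
have sqrt2pi : 0 < Num.sqrt (2 * pi) :> R by rewrite sqrtr_gt0 mulr_gt0.
have -> : Num.sqrt (2 * pi * (r / (1 - r) * t ^+ 2)) =
    r * t * Num.sqrt (2 * pi) / Num.sqrt (r * (1 - r)).
  have v2 : 0 <= 2 * pi * (r / (1 - r) * t ^+ 2).
    by apply/ltW/mulr_gt0 => //; rewrite mulr_gt0.
  apply: (mulIf (lt0r_neq0 sqrt01)); rewrite divfK ?gt_eqF // -sqrtrM //.
  have -> : 2 * pi * (r / (1 - r) * t ^+ 2) * (r * (1 - r)) = (r * t) ^+ 2 * (2 * pi).
    by field.
  by rewrite (sqrtrM _ (sqr_ge0 (r * t))) sqrtr_sqr ger0_norm ?mulr_ge0 ?ltW.
have /andP[B1 _] := @Beta_fn_half_bounds R.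
have B0 : 0 < Beta_fn (1/2 : R) (1/2) := lt_le_trans ltr01 B1.
by field; rewrite !gt_eqF.
Qed.

Lemma continuous_mix_kernel (c r : R) : r != 0 -> {for r, continuous (mix_kernel c)}.
Proof.
move=> r0; apply: continuousM; first exact: inv_continuous.
apply: continuous_comp; last exact: continuous_expR.
apply: continuousB; first exact: cvg_cst.
by apply: continuousM; [exact: cvg_cst | exact: inv_continuous].
Qed.

Lemma is_derive_expR_mix (k c r : R) : r != 0 ->
  is_derive r 1 (fun u => k * expR (c - c / u)) (k * (c / r * mix_kernel c r)).
Proof.
move=> r0.
have inner : is_derive r (1 : R) (fun u => c - c / u) (c * r ^- 2).
  have : is_derive r (1 : R) (fun u => u^-1) (- r ^- 2 *: 1) by exact: is_deriveV.
  move=> ?; apply: is_derive_eq.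
  by rewrite /GRing.scale /= add0r mul1r mulr1 mulrN opprK.
have := is_derive1_comp (is_derive_expR _) inner => /= ?.
apply: is_derive_eq; rewrite /mix_kernel /GRing.scale /=.
by field.
Qed.

Lemma continuous_mix_kernel_deriv (k c r : R) : r != 0 ->
  {for r, continuous (fun u : R => k * (c / u * mix_kernel c u))}.
Proof.
move=> r0; apply: continuousM; first exact: cvg_cst.
apply: continuousM; last exact: continuous_mix_kernel.
by apply: continuousM; [exact: cvg_cst | exact: inv_continuous].
Qed.

Lemma integral_itv_mix_kernel_deriv (k c a b : R) : 0 < a < b ->
  (\int[mu]_(r in `[a, b]) (k * (c / r * mix_kernel c r))%:E =
   (k * expR (c - c / b) - k * expR (c - c / a))%:E)%E.
Proof.
case/andP=> a0 ab; have pos r : a <= r -> r != 0 by move/(lt_le_trans a0)/lt0r_neq0.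
pose g r := k * (c / r * mix_kernel c r); pose G u := k * expR (c - c / u).
have deriv r : a <= r -> is_derive r 1 G (g r).
  by move/pos; exact: is_derive_expR_mix.
apply: (@continuous_FTC2 _ g G) => //.
- apply: continuous_in_subspaceT => r /set_mem /=.
  rewrite in_itv /= => /andP[/pos r_neq0 _].
  exact: continuous_mix_kernel_deriv.
- split.
  + by move=> r; rewrite in_itv /= => /andP[/ltW/deriv[]].
  + apply/cvg_at_right_filter/differentiable_continuous/derivable1_diffP.
    by case: (deriv a (lexx a)).
  + apply/cvg_at_left_filter/differentiable_continuous/derivable1_diffP.
    by case: (deriv b (ltW ab)).
- by move=> r; rewrite in_itv /= derive1E => /andP[/ltW/deriv[]].
Qed.

Lemma integral_mix_kernel_ge (K c r0 : R) : 0 <= K -> 0 < c -> 0 < r0 < 1 ->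
  ((K * r0 / c * (1 - expR (c - c / r0)))%:E <=
   \int[mu]_(r in `]0%R, 1%R[) (K * mix_kernel c r)%:E)%E.
Proof.
move=> K0 c0 r01; have /andP[r00 _] := r01.
set k := K * r0 / c; pose g r := k * (c / r * mix_kernel c r).
have mix_ge0 r : 0 < r -> 0 <= mix_kernel c r.
  by move=> r_gt0; rewrite mulr_ge0 ?expR_ge0 ?invr_ge0 ?(ltW r_gt0).
have g_le r : r0 <= r -> 0 <= g r <= K * mix_kernel c r.
  move=> r0r; have r_gt0 := lt_le_trans r00 r0r.
  have -> : g r = K * mix_kernel c r * (r0 / r).
    by rewrite /g /k; field; rewrite !gt_eqF.
  have Kmix_ge0 : 0 <= K * mix_kernel c r by rewrite mulr_ge0 ?mix_ge0.
  rewrite mulr_ge0 ?divr_ge0 ?(ltW r00) ?(ltW r_gt0) //=; apply: ler_piMr => //.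
  by rewrite ler_pdivrMr // mul1r.
have sub : (`[r0, 1%R[ : set R) `<=` `]0%R, 1%R[.
  by move=> r /=; rewrite !in_itv /= => /andP[? ->]; rewrite (lt_le_trans r00).
have mg : measurable_fun (`]0%R, 1%R[ : set R) (EFin \o g).
  apply: oo01_continuous_measurable_fun => r /andP[/lt0r_neq0 r_neq0 _].
  exact: continuous_mix_kernel_deriv.
have mmix : measurable_fun (`]0%R, 1%R[ : set R)
    (EFin \o (fun r => K * mix_kernel c r)).
  apply: oo01_continuous_measurable_fun => r /andP[/lt0r_neq0 r_neq0 _].
  by apply: continuousM; [exact: cvg_cst | exact: continuous_mix_kernel].
apply: (@le_trans _ _ (\int[mu]_(r in `[r0, 1%R[) (g r)%:E)%E).
  rewrite integral_itv_bndo_bndc; last exact: measurable_funS _ sub mg.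
  rewrite integral_itv_mix_kernel_deriv // divr1 subrr expR0 mulr1 lee_fin.
  by rewrite /k mulrBr mulr1.
apply: (@le_trans _ _ (\int[mu]_(r in `[r0, 1%R[) (K * mix_kernel c r)%:E)%E).
  apply: ge0_le_integral => //.
  - by move=> r /=; rewrite in_itv /= lee_fin => /andP[/g_le/andP[]].
  - exact: measurable_funS (measurable_itv _) sub mg.
  - exact: measurable_funS (measurable_itv _) sub mmix.
  - by move=> r /=; rewrite in_itv /= lee_fin => /andP[/g_le/andP[]].
apply: ge0_subset_integral => //.
by move=> r /=; rewrite in_itv /= lee_fin => /andP[r_gt0 _]; rewrite mulr_ge0 ?mix_ge0.
Qed.

Lemma sqrt_inv_2pi3 : Num.sqrt (1 / (2 * pi ^+ 3)) = (pi * Num.sqrt (2 * pi))^-1 :> R.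
Proof.
have pi0 : 0 < pi :> R := pi_gt0 R.
have S0 : 0 < Num.sqrt (2 * pi) :> R by rewrite sqrtr_gt0 mulr_gt0.
rewrite -[RHS]ger0_norm ?invr_ge0 ?mulr_ge0 ?ltW // -sqrtr_sqr.
by rewrite exprVn exprMn sqr_sqrtr ?mulr_ge0 ?ltW // div1r; congr (Num.sqrt _^-1); ring.
Qed.

Lemma pi_u_beta_halfE (t x : R) : 0 < t ->
  pi_u (1/2) (1/2) t x =
  (\int[mu]_(r in `]0%R, 1%R[)
     ((t * Num.sqrt (2 * pi) * Beta_fn (1/2 : R) (1/2))^-1 *
        mix_kernel (x ^+ 2 / (2 * t ^+ 2)) r)%:E)%E.
Proof.
move=> t0; apply: eq_integral => r; rewrite inE /= in_itv /= => r01.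
by rewrite normal_beta_half_productE.
Qed.

Lemma pi_u_beta_half_ge (t x : R) : 0 < t -> t ^+ 2 <= 1/12 -> 1 < x ->
  ((Num.sqrt (1 / (2 * pi ^+ 3)) * t / x ^+ 2)%:E <= pi_u (1/2) (1/2) t x)%E.
Proof.
move=> t0 t2 x1; rewrite pi_u_beta_halfE //.
have pi0 : 0 < pi :> R := pi_gt0 R.
have /andP[B1 Bpi] := @Beta_fn_half_bounds R.
set B := Beta_fn _ _ in B1 Bpi *; have B0 : 0 < B := lt_le_trans ltr01 B1.
set S := Num.sqrt (2 * pi : R); have S0 : 0 < S by rewrite sqrtr_gt0 mulr_gt0.
set c := x ^+ 2 / (2 * t ^+ 2).
have c6 : 6 <= c by rewrite /c ler_pdivlMr ?mulr_gt0 ?exprn_gt0 //; nra.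
have K0 : 0 <= (t * S * B)^-1 by rewrite invr_ge0 ltW // !mulr_gt0.
have r0 : 0 < (3/4 : R) < 1 by apply/andP; split; lra.
have c0 : 0 < c by apply: lt_le_trans c6.
apply: le_trans (integral_mix_kernel_ge _ _ _ K0 c0 r0).
rewrite lee_fin sqrt_inv_2pi3 -/S.
set E := expR (c - c / (3/4)).
have E3 : E <= 1/3.
  have -> : E = expR (- (c / 3)) by rewrite /E; congr expR; field.
  rewrite expRN div1r lef_pV2 ?posrE ?expR_gt0 //.
  by apply: le_trans (expR_ge1Dx _); lra.
set u := t / (S * x ^+ 2).
have x0 : 0 < x by lra.
have -> : (pi * S)^-1 * t / x ^+ 2 = pi^-1 * u.
  (* [pi] is generalized because [field] would unfold its definition. *)
  by rewrite /u; move: (pi : R) pi0 => q q0; field; rewrite !gt_eqF.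
have -> : (t * S * B)^-1 * (3/4) / c * (1 - E) = 3/2 * (1 - E) * B^-1 * u.
  by rewrite /u /c; field; rewrite !gt_eqF.
have u0 : 0 <= u by apply/ltW/divr_gt0 => //; rewrite mulr_gt0 ?exprn_gt0.
apply: ler_wpM2r => //; apply: (@le_trans _ _ B^-1); first by rewrite lef_pV2 ?posrE.
by rewrite ler_peMl ?invr_ge0 ?(ltW B0) //; lra.
Qed.

End scale_mixture.

Lemma eventually_le_of_mul_le (R : realType) (s w : nat -> R) (C e : R) :
  0 < e -> (forall n, 0 <= s n) ->
  (\forall n \near \oo, n%:R <= w n /\ s n * w n <= C) ->
  \forall n \near \oo, s n <= e.
Proof.
move=> e0 s_ge0 sw_le; near=> n.
have [wn swC] : n%:R <= w n /\ s n * w n <= C by near: n.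
have n0 : 0 < n%:R :> R by near: n; exact: nbhs_infty_gtr.
have : C <= n%:R * e by rewrite -ler_pdivrMr //; near: n; exact: nbhs_infty_ger.
have := s_ge0 n; nra.
Unshelve. all: by end_near.
Qed.

Theorem lemma4 (R : realType) (p : nat -> nat) (tau : R) (tau1 : nat -> R) :
  (fun n => (p n)%:R : R) @ \oo --> +oo ->
  1 <= tau ->
  (forall n, 0 < tau1 n) ->
  (exists c C : R, 0 < c /\ 0 < C /\
     \forall n \near \oo,
       c <= tau1 n ^+ 2 / (1 / (n%:R * (p n)%:R ^+ 4 * tau ^+ 2)) <= C) ->
  \forall n \near \oo, forall x : R, 1 < x ->
    ((Num.sqrt (1 / (2 * pi ^+ 3)) * tau1 n / x ^+ 2)%:E
       <= pi_u (1 / 2) (1 / 2) (tau1 n) x)%E.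
Proof.
move=> p_cvg tau_ge1 tau1_gt0 [c [C [_ [_ tau1_rate]]]].
have tau1_small : \forall n \near \oo, tau1 n ^+ 2 <= 1 / 12.
  apply: (@eventually_le_of_mul_le _ _ (fun n => n%:R * (p n)%:R ^+ 4 * tau ^+ 2) C).
  - by [].
  - by move=> n; rewrite sqr_ge0.
  near=> n; split.
  + have p_ge1 : 1 <= (p n)%:R :> R by near: n; exact: (cvgryPge _).1 p_cvg 1.
    by rewrite -mulrA ler_peMr // mulr_ege1 // exprn_ege1.
  + have /andP[_] : c <= tau1 n ^+ 2 / (1 / (n%:R * (p n)%:R ^+ 4 * tau ^+ 2)) <= C.
      by near: n.
    by rewrite div1r invrK.
near=> n => x x1.
by apply: pi_u_beta_half_ge => //; near: n.
Unshelve. all: by end_near.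
Qed.
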